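(* Let $M\ge1$ and let $\tau\in\mathbb{R}^{M+2}_{>0}$ be an $(M+1)$-layer travel time vector such that the set $$S=\{k\in\mathfrak{L}^\tau_{M+1}: k\neq k^{M+1},\ \langle k,\tau\rangle=\langle k^{M+1},\tau\rangle\}$$ is nonempty, where $k^{M+1}=(1,\ldots,1)\in\mathbb{Z}^{M+2}$. Let $\mathcal{R}$ be the set of all $(R_0,\ldots,R_M)\in(-1,1)^{M+1}$ for which there exists a nonzero $R_{M+1}\in(-1,1)$ such that, with $R'=(R_0,\ldots,R_{M+1})$, $$a(R',k^{M+1})+\sum_{k\in S}a(R',k)=0.$$ Then $\mathcal{R}$ has strictly positive Lebesgue measure in $\mathbb{R}^{M+1}$.
   Context: For $N\ge1$, $\mathfrak{L}_N\subset\mathbb{Z}^{N+1}_{\geq0}$ is the set of $k=(k_0,\ldots,k_N)$ with $k_0=1$ such that $k_n>0\Rightarrow k_{n-1}>0$ for $1\le n\le N$; for $\tau\in\mathbb{R}^{N+1}_{>0}$, $\mathfrak{L}^\tau_N=\{k\in\mathfrak{L}_N:\langle k,\tau\rangle\le\langle\mathbb{1},\tau\rangle\}$. Amplitude polynomial (for $k\in\mathfrak{L}_N$, $x=(x_0,\ldots,x_N)$): $\mathbb{1}=(1,\ldots,1)$; inequalities and $\min$ entrywise; $x^k=\prod_n x_n^{k_n}$, $\binom{k}{b}=\prod_n\binom{k_n}{b_n}$; $\tilde k=(k_1,\ldots,k_N,0)$, $u=\min\{\mathbb{1},\tilde k\}$, $V(k)=\{b:u\le b\le\min\{k,\tilde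 k\}\}$, $a(x,k)=\sum_{b\in V(k)}\binom{k}{b}\binom{\tilde k-u}{b-u}(-x)^{\tilde k-b}x^{k-b}\prod_n(1-x_n^2)^{b_n}$. *)

From Stdlib Require Import Reals List Arith.
Import ListNotations.
Open Scope R_scope.

(* A multi-index k = (k_0,...,k_N) is a list of naturals of length N+1;
   k_n = nth n k 0.  Real vectors x = (x_0,x_1,...) are functions nat -> R. *)

Definition kth (k : list nat) (n : nat) : nat := nth n k 0%nat.

Definition prodR (n : nat) (f : nat -> R) : R := fold_right Rmult 1 (map f (seq 0 n)).
Definition sumR (n : nat) (f : nat -> R) : R := fold_right Rplus 0 (map f (seq 0 n)).
Definition sumL {A} (l : list A) (f : A -> R) : R := fold_right Rplus 0 (map f l).

Fixpoint boxes (lo hi : list nat) : list (list nat) :=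
  match lo, hi with
  | l :: lo', h :: hi' =>
      flat_map (fun j => map (cons j) (boxes lo' hi')) (seq l (S h - l))
  | _, _ => [nil]
  end.

Definition inL (N : nat) (k : list nat) : Prop :=
  length k = S N /\ kth k 0 = 1%nat /\
  (forall n, (1 <= n <= N)%nat -> (0 < kth k n)%nat -> (0 < kth k (n - 1))%nat).

Definition dotk (k : list nat) (tau : nat -> R) : R :=
  sumR (length k) (fun n => INR (kth k n) * tau n).

Definition ones (N : nat) : list nat := repeat 1%nat (S N).

Definition inLtau (N : nat) (tau : nat -> R) (k : list nat) : Prop :=
  inL N k /\ dotk k tau <= dotk (ones N) tau.

Definition ktil (k : list nat) (n : nat) : nat := kth k (S n).   (* k~ = (k_1,..,k_N,0) *)
Definition uvec (k : list nat) (n : nat) : nat := Nat.min 1 (ktil k n).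

Definition ampl (x : nat -> R) (k : list nat) : R :=
  let d := length k in
  let lo := map (uvec k) (seq 0 d) in
  let hi := map (fun n => Nat.min (kth k n) (ktil k n)) (seq 0 d) in
  sumL (boxes lo hi) (fun b =>
    prodR d (fun n =>
      let kn := kth k n in let tn := ktil k n in let un := uvec k n in
      let bn := kth b n in
      C kn bn * C (tn - un) (bn - un) * (- x n) ^ (tn - bn) * (x n) ^ (kn - bn)
        * (1 - (x n) ^ 2) ^ bn)).

(* Lebesgue outer measure on R^d (points are functions nat -> R, only the
   coordinates 0..d-1 matter): E has positive outer measure iff there is
   eps > 0 such that every countable cover of E by closed boxes
   prod_{i<d} [lo j i, hi j i] has total volume >= eps. *)
Definition box_vol (d : nat) (lo hi : nat -> R) : R := prodR d (fun i => hi i - lo i).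

Definition positive_outer_measure (d : nat) (E : (nat -> R) -> Prop) : Prop :=
  exists eps : R, 0 < eps /\
    forall lo hi : nat -> nat -> R,
      (forall j i, (i < d)%nat -> lo j i <= hi j i) ->
      (forall x, E x -> exists j, forall i, (i < d)%nat -> lo j i <= x i <= hi j i) ->
      exists n, eps <= sumR n (fun j => box_vol d (lo j) (hi j)).

(* Every k in S has the travel time of k^(M+1) = (1,...,1) but differs from it, so its
   last entry is 0; hence a(R',k) depends only on x = (R_0,...,R_M), whereas
   a(R',k^(M+1)) = (prod_(n<=M) (1 - x_n^2)) * R_(M+1).  The equation is thus affine in
   R_(M+1) and has a solution in (-1,1) \ {0} as soon as
       0 < |ampl_sum x| < transmission x                                   ( * )
   where ampl_sum is the sum over S and transmission the product above.  Each amplitude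
   factors over the layers, and on the diagonal x = (t,...,t) each layer factor is
   t^|k_n - k_(n+1)| times a polynomial; so ampl_sum (t,...,t) = t^E h(t), where E is the
   least total variation over S and h(0) <> 0 because all terms of variation E carry the
   sign (-1)^((E-1)/2).  Hence ( * ) holds at a small diagonal point, then by continuity on
   a closed cube around it, and a closed cube has positive outer measure (a compactness
   and Riemann-sum covering argument, by induction on the dimension). *)

From Stdlib Require Import Reals List Arith Lia Lra Classical_Prop.
From Coquelicot Require Import Hierarchy.
Import ListNotations.
Open Scope R_scope.

Lemma sumL_ext {A} (l : list A) f g :
  (forall x, In x l -> f x = g x) -> sumL l f = sumL l g.
Proof.
  induction l as [|a l IH]; intros H; [reflexivity|].
  unfold sumL in *; simpl.
  rewrite (H a (or_introl eq_refl)), IH by (intros; apply H; right; auto). reflexivity.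
Qed.

Lemma sumL_app {A} (l1 l2 : list A) f : sumL (l1 ++ l2) f = sumL l1 f + sumL l2 f.
Proof. induction l1; unfold sumL in *; simpl; [ring | rewrite IHl1; ring]. Qed.

Lemma sumL_flat_map {A B} (g : A -> list B) l f :
  sumL (flat_map g l) f = sumL l (fun j => sumL (g j) f).
Proof.
  induction l as [|a l IH]; [reflexivity|].
  simpl. rewrite sumL_app, IH. reflexivity.
Qed.

Lemma sumL_map {A B} (h : A -> B) l f : sumL (map h l) f = sumL l (fun x => f (h x)).
Proof. unfold sumL. rewrite map_map. reflexivity. Qed.

Lemma sumL_scal_l {A} (l : list A) c f : sumL l (fun x => c * f x) = c * sumL l f.
Proof. induction l; unfold sumL in *; simpl; [ring | rewrite IHl; ring]. Qed.

Lemma sumL_scal_r {A} (l : list A) c f : sumL l (fun x => f x * c) = sumL l f * c.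
Proof. induction l; unfold sumL in *; simpl; [ring | rewrite IHl; ring]. Qed.

Lemma sumL_zero {A} (l : list A) f : (forall x, In x l -> f x = 0) -> sumL l f = 0.
Proof.
  intros H. rewrite (sumL_ext l f (fun _ => 0)) by auto. clear H.
  induction l; unfold sumL in *; simpl; [|rewrite IHl]; ring.
Qed.

Lemma sumL_nonneg {A} (l : list A) f : (forall x, In x l -> 0 <= f x) -> 0 <= sumL l f.
Proof.
  induction l as [|a l IH]; intros H; unfold sumL in *; simpl; [lra|].
  pose proof (H a (or_introl eq_refl)). specialize (IH (fun x Hx => H x (or_intror Hx))).
  lra.
Qed.

Lemma sumL_pos {A} (l : list A) f x0 :
  (forall x, In x l -> 0 <= f x) -> In x0 l -> 0 < f x0 -> 0 < sumL l f.
Proof.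
  induction l as [|a l IH]; intros H Hin Hp; [destruct Hin|].
  unfold sumL; simpl; fold (sumL l f).
  pose proof (sumL_nonneg l f (fun x Hx => H x (or_intror Hx))).
  pose proof (H a (or_introl eq_refl)).
  destruct Hin as [<-|Hin]; [lra|].
  specialize (IH (fun x Hx => H x (or_intror Hx)) Hin Hp). lra.
Qed.

Lemma sumR_S n f : sumR (S n) f = sumR n f + f n.
Proof.
  change (sumL (seq 0 (S n)) f = sumL (seq 0 n) f + f n).
  rewrite seq_S, sumL_app. unfold sumL at 2. simpl. ring.
Qed.

Lemma prodR_S n f : prodR (S n) f = prodR n f * f n.
Proof.
  unfold prodR. rewrite seq_S, map_app, fold_right_app. simpl.
  induction (map f (seq 0 n)); simpl; [ring | rewrite IHl; ring].
Qed.

Lemma sumR_shift n f : sumR (S n) f = f O + sumR n (fun i => f (S i)).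
Proof. unfold sumR. simpl. rewrite <- seq_shift, map_map. reflexivity. Qed.

Lemma prodR_shift n f : prodR (S n) f = f O * prodR n (fun i => f (S i)).
Proof. unfold prodR. simpl. rewrite <- seq_shift, map_map. reflexivity. Qed.

Lemma sumR_ext n f g : (forall i, (i < n)%nat -> f i = g i) -> sumR n f = sumR n g.
Proof. intros H. apply sumL_ext. intros i Hi. apply in_seq in Hi. apply H. lia. Qed.

Lemma prodR_ext n f g : (forall i, (i < n)%nat -> f i = g i) -> prodR n f = prodR n g.
Proof.
  induction n; intros H; [reflexivity|].
  rewrite !prodR_S, (H n), IHn; [reflexivity | intros i Hi; apply H; lia | lia].
Qed.

Lemma sumR_plus n f g : sumR n (fun i => f i + g i) = sumR n f + sumR n g.
Proof. induction n; [unfold sumR; simpl; ring | rewrite !sumR_S, IHn; ring]. Qed.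

Lemma sumR_scal n c f : sumR n (fun i => c * f i) = c * sumR n f.
Proof. apply sumL_scal_l. Qed.

Lemma sumR_const n c : sumR n (fun _ => c) = INR n * c.
Proof. induction n; [unfold sumR; simpl; ring | rewrite sumR_S, IHn, S_INR; ring]. Qed.

Lemma sumR_nonneg n f : (forall i, (i < n)%nat -> 0 <= f i) -> 0 <= sumR n f.
Proof. intros H. apply sumL_nonneg. intros i Hi. apply in_seq in Hi. apply H. lia. Qed.

Lemma sumR_le n f g : (forall i, (i < n)%nat -> f i <= g i) -> sumR n f <= sumR n g.
Proof.
  induction n; intros H; [unfold sumR; simpl; lra|].
  rewrite !sumR_S. pose proof (H n (Nat.lt_succ_diag_r n)).
  pose proof (IHn (fun i Hi => H i (Nat.lt_lt_succ_r _ _ Hi))). lra.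
Qed.

Lemma sumR_mono_n n m f : (n <= m)%nat -> (forall i, 0 <= f i) -> sumR n f <= sumR m f.
Proof. intros Hnm Hf. induction Hnm; [lra|]. rewrite sumR_S. specialize (Hf m). lra. Qed.

Lemma sumR_ge_term n f j : (j < n)%nat -> (forall i, 0 <= f i) -> f j <= sumR n f.
Proof.
  intros Hj Hf. apply Rle_trans with (sumR (S j) f); [|apply sumR_mono_n; auto].
  rewrite sumR_S. pose proof (sumR_nonneg j f (fun i _ => Hf i)). lra.
Qed.

Lemma sumR_swap n m (f : nat -> nat -> R) :
  sumR n (fun i => sumR m (fun j => f i j)) = sumR m (fun j => sumR n (fun i => f i j)).
Proof.
  induction n.
  - symmetry. induction m; [reflexivity|]. rewrite sumR_S, IHm. unfold sumR; simpl; ring.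
  - rewrite sumR_S, IHn, <- sumR_plus. apply sumR_ext. intros. rewrite sumR_S. ring.
Qed.

Lemma sumR_zero_all n f : (forall i, (i < n)%nat -> 0 <= f i) -> sumR n f = 0 ->
  forall i, (i < n)%nat -> f i = 0.
Proof.
  induction n; intros H0 Hs i Hi; [lia|].
  rewrite sumR_S in Hs.
  pose proof (sumR_nonneg n f (fun j Hj => H0 j (Nat.lt_lt_succ_r _ _ Hj))).
  pose proof (H0 n (Nat.lt_succ_diag_r n)).
  destruct (Nat.eq_dec i n) as [->|Hne]; [lra|].
  apply IHn; [intros j Hj; apply H0; lia | lra | lia].
Qed.

Lemma geom_sum N : sumR N (fun j => (/2) ^ j) = 2 - 2 * (/2) ^ N.
Proof. induction N; [unfold sumR; simpl; field | rewrite sumR_S, IHN; simpl; field]. Qed.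

Lemma prodR_mult n f g : prodR n (fun i => f i * g i) = prodR n f * prodR n g.
Proof. induction n; [unfold prodR; simpl; ring | rewrite !prodR_S, IHn; ring]. Qed.

Lemma prodR_one n : prodR n (fun _ => 1) = 1.
Proof. induction n; [reflexivity | rewrite prodR_S, IHn; ring]. Qed.

Lemma prodR_nonneg n f : (forall i, (i < n)%nat -> 0 <= f i) -> 0 <= prodR n f.
Proof.
  induction n; intros H; [unfold prodR; simpl; lra|].
  rewrite prodR_S. apply Rmult_le_pos; [apply IHn; intros|]; apply H; lia.
Qed.

Lemma prodR_pos n f : (forall i, (i < n)%nat -> 0 < f i) -> 0 < prodR n f.
Proof.
  induction n; intros H; [unfold prodR; simpl; lra|].
  rewrite prodR_S. apply Rmult_lt_0_compat; [apply IHn; intros|]; apply H; lia.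
Qed.

Fixpoint sumN (d : nat) (f : nat -> nat) : nat :=
  match d with O => O | S d' => (sumN d' f + f d')%nat end.

Lemma sumN_plus d f g : sumN d (fun n => f n + g n)%nat = (sumN d f + sumN d g)%nat.
Proof. induction d; simpl; [|rewrite IHd]; lia. Qed.

Lemma prodR_pow d t f : prodR d (fun n => t ^ (f n)) = t ^ (sumN d f).
Proof. induction d; [reflexivity | rewrite prodR_S, IHd; simpl; rewrite pow_add; ring]. Qed.

(** Telescoping in truncated arithmetic: total ascent plus start equals total descent plus end. *)
Lemma telescope_nat f d :
  (sumN d (fun n => f (S n) - f n) + f O = sumN d (fun n => f n - f (S n)) + f d)%nat.
Proof. induction d; simpl; lia. Qed.

(** ** The amplitude polynomial is a product of one-layer factors *)

Lemma boxes_prod : forall lo hi (G : nat -> nat -> R), length lo = length hi ->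
  sumL (boxes lo hi) (fun b => prodR (length lo) (fun n => G n (kth b n))) =
  prodR (length lo) (fun n => sumL (seq (kth lo n) (S (kth hi n) - kth lo n)) (G n)).
Proof.
  induction lo as [|l lo IH]; intros [|h hi] G Hlen; simpl in Hlen; try lia.
  - unfold sumL, prodR. simpl. ring.
  - simpl boxes. simpl length. rewrite sumL_flat_map, prodR_shift, <- sumL_scal_r.
    apply sumL_ext. intros j _.
    rewrite sumL_map.
    change (fun i => sumL (seq (kth (l :: lo) (S i)) (S (kth (h :: hi) (S i)) - kth (l :: lo) (S i))) (G (S i)))
      with (fun i => sumL (seq (kth lo i) (S (kth hi i) - kth lo i)) (G (S i))).
    rewrite <- (IH hi (fun n => G (S n))), <- sumL_scal_l by lia.
    apply sumL_ext. intros b _. apply prodR_shift.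
Qed.

(** The factor contributed by layer [n] when [k_n = p] and [k_(n+1) = q]. *)
Definition layer_factor (p q : nat) (x : R) : R :=
  sumL (seq (Nat.min 1 q) (S (Nat.min p q) - Nat.min 1 q))
   (fun b => C p b * C (q - Nat.min 1 q) (b - Nat.min 1 q) * (- x) ^ (q - b) * x ^ (p - b)
              * (1 - x ^ 2) ^ b).

Lemma nth_map_seq (f : nat -> nat) d n : (n < d)%nat -> nth n (map f (seq 0 d)) 0%nat = f n.
Proof.
  intros H. rewrite nth_indep with (d' := f 0%nat) by (rewrite length_map, length_seq; lia).
  rewrite map_nth, seq_nth by lia. reflexivity.
Qed.

Lemma ampl_prod x k :
  ampl x k = prodR (length k) (fun n => layer_factor (kth k n) (kth k (S n)) (x n)).
Proof.
  unfold ampl. cbv zeta.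
  set (d := length k).
  set (lo := map (uvec k) (seq 0 d)).
  set (hi := map (fun n => Nat.min (kth k n) (ktil k n)) (seq 0 d)).
  assert (Hlo : length lo = d) by (unfold lo; rewrite length_map, length_seq; auto).
  assert (Hhi : length hi = d) by (unfold hi; rewrite length_map, length_seq; auto).
  set (G := fun n bn => C (kth k n) bn * C (ktil k n - uvec k n) (bn - uvec k n) *
       (- x n) ^ (ktil k n - bn) * x n ^ (kth k n - bn) * (1 - x n ^ 2) ^ bn).
  transitivity (sumL (boxes lo hi) (fun b => prodR (length lo) (fun n => G n (kth b n))));
    [rewrite Hlo; reflexivity|].
  rewrite boxes_prod, Hlo by congruence.
  apply prodR_ext. intros n Hn.
  assert (E1 : kth lo n = uvec k n) by exact (nth_map_seq _ d n Hn).
  assert (E2 : kth hi n = Nat.min (kth k n) (ktil k n))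
    by exact (nth_map_seq (fun n => Nat.min (kth k n) (ktil k n)) d n Hn).
  rewrite E1, E2. reflexivity.
Qed.

Lemma layer_factor_11 x : layer_factor 1 1 x = 1 - x ^ 2.
Proof. unfold layer_factor, sumL, C. simpl. field. Qed.

Lemma layer_factor_10 x : layer_factor 1 0 x = x.
Proof. unfold layer_factor, sumL, C. simpl. field. Qed.

Lemma layer_factor_00 x : layer_factor 0 0 x = 1.
Proof. unfold layer_factor, sumL, C. simpl. field. Qed.

(** Each layer factor is [x^|p-q|] times a polynomial [reduced_factor] in [x]
    whose value at [0] is a signed product of binomial coefficients. *)
Definition reduced_factor (p q : nat) (t : R) : R :=
  sumL (seq (Nat.min 1 q) (S (Nat.min p q) - Nat.min 1 q))
   (fun b => C p b * C (q - Nat.min 1 q) (b - Nat.min 1 q) * (-1) ^ (q - b)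
     * t ^ (2 * (Nat.min p q - b)) * (1 - t ^ 2) ^ b).

Lemma layer_factor_reduced p q t :
  layer_factor p q t = t ^ ((p - q) + (q - p)) * reduced_factor p q t.
Proof.
  unfold layer_factor, reduced_factor. rewrite <- sumL_scal_l. apply sumL_ext.
  intros b Hb. apply in_seq in Hb.
  assert (Hpw : (- t) ^ (q - b) * t ^ (p - b) =
     (-1) ^ (q - b) * (t ^ ((p - q) + (q - p)) * t ^ (2 * (Nat.min p q - b)))).
  { rewrite <- pow_add.
    replace ((p - q) + (q - p) + 2 * (Nat.min p q - b))%nat with ((q - b) + (p - b))%nat by lia.
    rewrite pow_add. replace (- t) with ((-1) * t) by ring. rewrite Rpow_mult_distr. ring. }
  transitivity (C p b * C (q - Nat.min 1 q) (b - Nat.min 1 q) *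
                ((- t) ^ (q - b) * t ^ (p - b)) * (1 - t ^ 2) ^ b); [ring|].
  rewrite Hpw. ring.
Qed.

(** At [t = 0] only the top summand [b = min p q] of [reduced_factor] survives. *)
Lemma reduced_factor_0 p q : (Nat.min 1 q <= Nat.min p q)%nat ->
  reduced_factor p q 0 =
  (-1) ^ (q - p) * (C p (Nat.min p q) * C (q - Nat.min 1 q) (Nat.min p q - Nat.min 1 q)).
Proof.
  intros Hum. unfold reduced_factor.
  set (u := Nat.min 1 q) in *. set (m := Nat.min p q) in *.
  replace (S m - u)%nat with (S (m - u)) by lia.
  rewrite seq_S. replace (u + (m - u))%nat with m by lia.
  rewrite sumL_app, sumL_zero.
  - unfold sumL; simpl. rewrite Nat.sub_diag.
    replace (q - m)%nat with (q - p)%nat by (unfold m; lia).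
    simpl. rewrite Rmult_0_l, Rminus_0_r, pow1. ring.
  - intros b Hb. apply in_seq in Hb.
    replace (2 * (m - b))%nat with (S (2 * (m - b) - 1)) by lia. simpl. ring.
Qed.

(** ** Multi-indices with the same travel time as the all-ones index *)

Lemma kth_ones N n : (n <= N)%nat -> kth (ones N) n = 1%nat.
Proof. intros Hn. apply nth_repeat_lt. lia. Qed.

Lemma kth_ones_out N n : (S N <= n)%nat -> kth (ones N) n = 0%nat.
Proof. intros Hn. apply nth_overflow. unfold ones. rewrite repeat_length. lia. Qed.

(** In [L_N] the positive entries form an initial segment, so a positive last
    entry makes every entry positive. *)
Lemma inL_all_pos N k : inL N k -> (0 < kth k N)%nat ->
  forall n, (n <= N)%nat -> (1 <= kth k n)%nat.
Proof.
  intros [_ [_ Hchain]] HN.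
  assert (Hdown : forall i, (i <= N)%nat -> (0 < kth k (N - i))%nat).
  { induction i as [|i IH]; intros Hi; [rewrite Nat.sub_0_r; exact HN|].
    replace (N - S i)%nat with (N - i - 1)%nat by lia.
    apply Hchain; [lia | apply IH; lia]. }
  intros n Hn. replace n with (N - (N - n))%nat by lia. apply Hdown. lia.
Qed.

Lemma dotk_ones_rigid N tau k : (forall n, (n <= N)%nat -> 0 < tau n) ->
  length k = S N -> (forall n, (n <= N)%nat -> (1 <= kth k n)%nat) ->
  dotk k tau = dotk (ones N) tau -> k = ones N.
Proof.
  intros Htau Hlen Hge1 Hdot.
  unfold dotk in Hdot. unfold ones at 1 in Hdot. rewrite Hlen, repeat_length in Hdot.
  set (g := fun n => (INR (kth k n) - 1) * tau n).
  assert (Hg0 : forall n, (n < S N)%nat -> 0 <= g n).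
  { intros n Hn. unfold g. apply Rmult_le_pos; [|left; apply Htau; lia].
    assert (INR 1 <= INR (kth k n)) by (apply le_INR, Hge1; lia). simpl in *. lra. }
  assert (Hsum : sumR (S N) g = 0).
  { unfold g. rewrite (sumR_ext _ _ (fun n => INR (kth k n) * tau n + (-1) * tau n))
      by (intros; ring).
    rewrite sumR_plus, sumR_scal, Hdot, <- sumR_scal, <- sumR_plus.
    rewrite <- (Rmult_0_r (INR (S N))), <- sumR_const. apply sumR_ext.
    intros n Hn. rewrite kth_ones by lia. simpl. ring. }
  apply nth_ext with (d := 0%nat) (d' := 0%nat).
  { unfold ones. rewrite repeat_length. exact Hlen. }
  intros n Hn. rewrite Hlen in Hn. fold (kth k n) (kth (ones N) n).
  rewrite kth_ones by lia. apply INR_eq.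
  pose proof (sumR_zero_all _ _ Hg0 Hsum n Hn) as Hgn. unfold g in Hgn.
  pose proof (Htau n ltac:(lia)). simpl. nra.
Qed.

(** The members of [S] are the indices of [L_(M+1)] that never reach the last layer. *)
Definition avoids_last_layer (M : nat) (k : list nat) : Prop :=
  inL (S M) k /\ kth k (S M) = 0%nat.

Lemma S_avoids_last_layer M tau k : (forall n, (n <= S M)%nat -> 0 < tau n) ->
  inL (S M) k -> k <> ones (S M) -> dotk k tau = dotk (ones (S M)) tau ->
  avoids_last_layer M k.
Proof.
  intros Htau HL Hne Hdot. split; [exact HL|].
  destruct (Nat.eq_dec (kth k (S M)) 0) as [E|E]; [exact E|].
  exfalso. apply Hne. apply (dotk_ones_rigid (S M) tau k Htau); auto.
  - apply HL.
  - apply inL_all_pos; [exact HL | lia].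
Qed.

(** Total variation [E] and total ascent [U] of the first [M+2] entries of [k];
    [E] is the exponent of the lowest-order diagonal term of the amplitude. *)
Definition variation (M : nat) (k : list nat) : nat :=
  sumN (S M) (fun n => (kth k n - kth k (S n)) + (kth k (S n) - kth k n))%nat.

Definition ascent (M : nat) (k : list nat) : nat :=
  sumN (S M) (fun n => kth k (S n) - kth k n)%nat.

(** A path from height 1 down to height 0 descends once more than it ascends. *)
Lemma variation_ascent M k : avoids_last_layer M k ->
  variation M k = (2 * ascent M k + 1)%nat.
Proof.
  intros [[_ [H0 _]] H1]. unfold variation, ascent. rewrite sumN_plus.
  pose proof (telescope_nat (kth k) (S M)) as T. rewrite H0, H1 in T. lia.
Qed.

(** ** The equation in terms of the first [M+1] reflection coefficients *)

(** For [k] avoiding the last layer, [a(R',k)] depends only on [x = (R'_0,...,R'_M)]. *)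
Definition trunc_ampl (M : nat) (k : list nat) (x : nat -> R) : R :=
  prodR (S M) (fun n => layer_factor (kth k n) (kth k (S n)) (x n)).

Definition transmission (M : nat) (x : nat -> R) : R := prodR (S M) (fun n => 1 - x n ^ 2).

Lemma ampl_ones_split M R' x y :
  (forall n, (n <= M)%nat -> R' n = x n) -> R' (S M) = y ->
  ampl R' (ones (S M)) = transmission M x * y.
Proof.
  intros Hx Hy. rewrite ampl_prod. unfold ones at 1. rewrite repeat_length.
  rewrite prodR_S, kth_ones, kth_ones_out, Hy, layer_factor_10 by lia.
  f_equal. apply prodR_ext. intros n Hn.
  rewrite !kth_ones, Hx, layer_factor_11 by lia. reflexivity.
Qed.

Lemma ampl_avoiding M R' x k : avoids_last_layer M k ->
  (forall n, (n <= M)%nat -> R' n = x n) -> ampl R' k = trunc_ampl M k x.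
Proof.
  intros [[Hlen _] Hlast] Hx. rewrite ampl_prod, Hlen, prodR_S, Hlast.
  assert (Hout : kth k (S (S M)) = 0%nat) by (apply nth_overflow; lia).
  rewrite Hout, layer_factor_00, Rmult_1_r. apply prodR_ext.
  intros n Hn. rewrite Hx by lia. reflexivity.
Qed.

(** On the diagonal [x = (t,...,t)] the amplitude is [t^E] times a polynomial whose
    value at [0] is [(-1)^U] times a positive product of binomial coefficients. *)
Definition reduced_ampl (M : nat) (k : list nat) (t : R) : R :=
  prodR (S M) (fun n => reduced_factor (kth k n) (kth k (S n)) t).

Definition binomial_weight (M : nat) (k : list nat) : R :=
  prodR (S M) (fun n =>
   C (kth k n) (Nat.min (kth k n) (kth k (S n))) *
   C (kth k (S n) - Nat.min 1 (kth k (S n)))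
     (Nat.min (kth k n) (kth k (S n)) - Nat.min 1 (kth k (S n)))).

Lemma trunc_ampl_diag M k t :
  trunc_ampl M k (fun _ => t) = t ^ (variation M k) * reduced_ampl M k t.
Proof.
  unfold trunc_ampl, variation, reduced_ampl.
  rewrite <- prodR_pow, <- prodR_mult. apply prodR_ext.
  intros. apply layer_factor_reduced.
Qed.

Lemma C_pos n k : 0 < C n k.
Proof.
  unfold C. apply Rdiv_lt_0_compat; [|apply Rmult_lt_0_compat]; apply INR_fact_lt_0.
Qed.

Lemma binomial_weight_pos M k : 0 < binomial_weight M k.
Proof. apply prodR_pos. intros. apply Rmult_lt_0_compat; apply C_pos. Qed.

Lemma reduced_ampl_0 M k : avoids_last_layer M k ->
  reduced_ampl M k 0 = (-1) ^ (ascent M k) * binomial_weight M k.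
Proof.
  intros [[_ [_ Hchain]] _]. unfold reduced_ampl, ascent, binomial_weight.
  rewrite <- prodR_pow, <- prodR_mult. apply prodR_ext.
  intros n Hn. apply reduced_factor_0.
  destruct (Nat.eq_dec (kth k (S n)) 0) as [E|E]; [rewrite E; lia|].
  specialize (Hchain (S n) ltac:(lia) ltac:(lia)). rewrite Nat.sub_1_r in Hchain.
  simpl in Hchain. lia.
Qed.

(** ** Continuity of the amplitudes *)

Definition tends {T} (F : (T -> Prop) -> Prop) (f : T -> R) (v : R) : Prop :=
  filterlim f F (locally v).

Lemma ball_R x e y : Rabs (y - x) < e -> ball x e y.
Proof. intros H. exact H. Qed.

Definition coord_nbhd (M : nat) (c : nat -> R) (P : (nat -> R) -> Prop) : Prop :=
  exists dl : posreal, forall x, (forall i, (i <= M)%nat -> Rabs (x i - c i) < dl) -> P x.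

Global Instance coord_nbhd_filter M c : Filter (coord_nbhd M c).
Proof.
  constructor.
  - exists (mkposreal 1 Rlt_0_1). auto.
  - intros P Q [d1 H1] [d2 H2].
    exists (mkposreal _ (Rmin_pos d1 d2 (cond_pos d1) (cond_pos d2))). simpl.
    intros x Hx. split; [apply H1 | apply H2]; intros i Hi;
      eapply Rlt_le_trans; try apply Hx; auto; [apply Rmin_l | apply Rmin_r].
  - intros P Q HPQ [d H]. exists d. auto.
Qed.

Section Tends.
Context {T : Type} {F : (T -> Prop) -> Prop} {FF : Filter F}.

Lemma tends_const c : tends F (fun _ => c) c.
Proof. apply filterlim_const. Qed.

Lemma tends_plus f g a b : tends F f a -> tends F g b -> tends F (fun z => f z + g z) (a + b).
Proof. intros Hf Hg. exact (filterlim_comp_2 f g plus Hf Hg (filterlim_plus a b)). Qed.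

Lemma tends_mult f g a b : tends F f a -> tends F g b -> tends F (fun z => f z * g z) (a * b).
Proof. intros Hf Hg. exact (filterlim_comp_2 f g mult Hf Hg (filterlim_mult a b)). Qed.

Lemma tends_opp f a : tends F f a -> tends F (fun z => - f z) (- a).
Proof.
  intros Hf. replace (- a) with ((-1) * a) by ring.
  apply filterlim_ext with (fun z => (-1) * f z); [intros; ring|].
  apply tends_mult; [apply tends_const | exact Hf].
Qed.

Lemma tends_minus f g a b : tends F f a -> tends F g b -> tends F (fun z => f z - g z) (a - b).
Proof. intros. apply tends_plus, tends_opp; auto. Qed.

Lemma tends_pow f a n : tends F f a -> tends F (fun z => f z ^ n) (a ^ n).
Proof. intros Hf. induction n; [apply tends_const | apply tends_mult; auto]. Qed.

Lemma tends_sumL {A} (l : list A) (f : A -> T -> R) (v : A -> R) :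
  (forall x, In x l -> tends F (f x) (v x)) ->
  tends F (fun z => sumL l (fun x => f x z)) (sumL l v).
Proof.
  induction l; intros H; [apply tends_const|].
  apply tends_plus; [apply H; left; auto | apply IHl; intros; apply H; right; auto].
Qed.

Lemma tends_prodR n (f : nat -> T -> R) (v : nat -> R) :
  (forall i, (i < n)%nat -> tends F (f i) (v i)) ->
  tends F (fun z => prodR n (fun i => f i z)) (prodR n v).
Proof.
  induction n; intros H; [apply tends_const|].
  apply filterlim_ext with (fun z => prodR n (fun i => f i z) * f n z);
    [intros; rewrite prodR_S; auto|].
  rewrite prodR_S. apply tends_mult; [apply IHn; intros|]; apply H; lia.
Qed.

Lemma tends_layer_factor p q g a :
  tends F g a -> tends F (fun z => layer_factor p q (g z)) (layer_factor p q a).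
Proof.
  intros Hg. apply tends_sumL. intros b _.
  repeat apply tends_mult; try apply tends_const; apply tends_pow; auto.
  - apply tends_opp; auto.
  - apply tends_minus; [apply tends_const | apply tends_pow; auto].
Qed.

Lemma tends_reduced_factor p q g a :
  tends F g a -> tends F (fun z => reduced_factor p q (g z)) (reduced_factor p q a).
Proof.
  intros Hg. apply tends_sumL. intros b _.
  repeat apply tends_mult; try apply tends_const; apply tends_pow; auto.
  apply tends_minus; [apply tends_const | apply tends_pow; auto].
Qed.

Lemma tends_trunc_ampl M k (g : T -> nat -> R) c :
  (forall i, (i <= M)%nat -> tends F (fun z => g z i) (c i)) ->
  tends F (fun z => trunc_ampl M k (g z)) (trunc_ampl M k c).
Proof.
  intros Hg. apply tends_prodR. intros i Hi. apply tends_layer_factor, Hg. lia.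
Qed.

Lemma tends_transmission M (g : T -> nat -> R) c :
  (forall i, (i <= M)%nat -> tends F (fun z => g z i) (c i)) ->
  tends F (fun z => transmission M (g z)) (transmission M c).
Proof.
  intros Hg. apply tends_prodR. intros i Hi.
  apply tends_minus; [apply tends_const | apply tends_pow, Hg; lia].
Qed.

Lemma tends_get f a eps : tends F f a -> 0 < eps -> F (fun z => Rabs (f z - a) < eps).
Proof.
  intros Hf He. exact (proj1 (filterlim_locally f a) Hf (mkposreal eps He)).
Qed.

Lemma eventually_nonzero_below f g a b : tends F f a -> tends F g b ->
  a <> 0 -> Rabs a < b -> F (fun z => f z <> 0 /\ Rabs (f z) < g z).
Proof.
  intros Hf Hg Ha Hab. pose proof (Rabs_pos_lt a Ha) as Hapos.
  set (ep := Rmin (Rabs a) (b - Rabs a) / 2).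
  assert (Hep : 0 < ep) by (apply Rdiv_lt_0_compat; [apply Rmin_pos|]; lra).
  assert (Hep1 : ep <= Rabs a / 2) by (pose proof (Rmin_l (Rabs a) (b - Rabs a)); unfold ep; lra).
  assert (Hep2 : ep <= (b - Rabs a) / 2)
    by (pose proof (Rmin_r (Rabs a) (b - Rabs a)); unfold ep; lra).
  apply filter_imp with (2 := filter_and _ _ (tends_get f a ep Hf Hep) (tends_get g b ep Hg Hep)).
  intros z [Hfz Hgz]. apply Rabs_def2 in Hgz.
  pose proof (Rabs_triang (f z - a) a) as Hup. replace (f z - a + a) with (f z) in Hup by ring.
  pose proof (Rabs_triang_inv a (f z)) as Hlow. rewrite Rabs_minus_sym in Hlow.
  assert (Hpos : 0 < Rabs (f z)) by lra.
  split; [intros E; rewrite E, Rabs_R0 in Hpos | ]; lra.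
Qed.
End Tends.

Lemma tends_coord M c i : (i <= M)%nat -> tends (coord_nbhd M c) (fun x => x i) (c i).
Proof.
  intros Hi. apply filterlim_locally. intros eps. exists eps. intros x Hx. apply Hx, Hi.
Qed.

Lemma small_positive_point (P : R -> Prop) : locally 0 P -> exists t, 0 < t <= 1/4 /\ P t.
Proof.
  intros [dl Hdl]. exists (Rmin dl 1 / 4).
  pose proof (Rmin_l dl 1). pose proof (Rmin_r dl 1). pose proof (cond_pos dl).
  assert (0 < Rmin dl 1) by (apply Rmin_pos; lra).
  split; [lra|]. apply Hdl, ball_R. rewrite Rminus_0_r, Rabs_right; lra.
Qed.

(** ** The lowest-order diagonal terms do not cancel *)

Definition ampl_sum (M : nat) (S_ : list (list nat)) (x : nat -> R) : R :=
  sumL S_ (fun k => trunc_ampl M k x).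

Lemma list_argmin {A} (l : list A) (f : A -> nat) : l <> nil ->
  exists x, In x l /\ forall y, In y l -> (f x <= f y)%nat.
Proof.
  induction l as [|a l IH]; intros H; [congruence|].
  destruct l as [|b l'].
  { exists a. split; [left; auto|]. intros y [<-|[]]. lia. }
  destruct IH as [x [Hx Hm]]; [congruence|].
  destruct (le_lt_dec (f a) (f x)).
  - exists a. split; [left; auto|]. intros y [<-|Hy]; [lia|]. specialize (Hm y Hy). lia.
  - exists x. split; [right; auto|]. intros y [<-|Hy]; [lia | auto].
Qed.

Lemma tends_id_locally (t : R) : tends (locally t) (fun x => x) t.
Proof. apply filterlim_id. Qed.

Section Diagonal.
Variables (M : nat) (S_ : list (list nat)).
Hypothesis HS_avoid : forall k, In k S_ -> avoids_last_layer M k.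
Hypothesis HS_ne : S_ <> nil.

(** The terms of minimal variation [E] all have ascent [(E-1)/2], hence leading
    coefficients of the same sign, which therefore cannot cancel. *)
Lemma diag_leading_order : exists (E : nat) (h : R -> R),
  (1 <= E)%nat /\ tends (locally 0) h (h 0) /\ h 0 <> 0 /\
  forall t, ampl_sum M S_ (fun _ => t) = t ^ E * h t.
Proof.
  destruct (list_argmin S_ (variation M) HS_ne) as [k0 [Hk0 Hmin]].
  set (E := variation M k0).
  set (h := fun t => sumL S_ (fun k => t ^ (variation M k - E) * reduced_ampl M k t)).
  assert (Hasc : forall k, In k S_ -> variation M k = E -> ascent M k = ascent M k0).
  { intros k Hk HE. pose proof (variation_ascent M k (HS_avoid k Hk)).
    pose proof (variation_ascent M k0 (HS_avoid k0 Hk0)). unfold E in HE. lia. }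
  assert (Hh0 : h 0 = (-1) ^ ascent M k0 *
      sumL S_ (fun k => if Nat.eq_dec (variation M k) E then binomial_weight M k else 0)).
  { unfold h. rewrite <- sumL_scal_l. apply sumL_ext. intros k Hk.
    destruct Nat.eq_dec as [HE|HE].
    - rewrite HE, Nat.sub_diag, pow_O, reduced_ampl_0, Hasc by auto. ring.
    - specialize (Hmin k Hk). fold E in Hmin.
      replace (variation M k - E)%nat with (S (variation M k - E - 1)) by lia. simpl. ring. }
  exists E, h. split; [|split; [|split]].
  - unfold E. rewrite (variation_ascent M k0 (HS_avoid k0 Hk0)). lia.
  - apply tends_sumL. intros k _. apply tends_mult.
    + apply tends_pow, tends_id_locally.
    + apply tends_prodR. intros i _. apply tends_reduced_factor, tends_id_locally.
  - rewrite Hh0. apply Rmult_integral_contrapositive. split; [apply pow_nonzero; lra|].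
    apply Rgt_not_eq, (sumL_pos _ _ k0); auto.
    + intros k _. destruct Nat.eq_dec; [left; apply binomial_weight_pos | lra].
    + destruct Nat.eq_dec as [_|HE]; [apply binomial_weight_pos | now elim HE].
  - intros t. unfold ampl_sum, h. rewrite <- sumL_scal_l. apply sumL_ext. intros k Hk.
    rewrite trunc_ampl_diag, <- Rmult_assoc, <- pow_add. specialize (Hmin k Hk).
    fold E in Hmin. replace (E + (variation M k - E))%nat with (variation M k) by lia.
    reflexivity.
Qed.

Lemma diag_good_point : exists t, 0 < t <= 1/4 /\
  ampl_sum M S_ (fun _ => t) <> 0 /\
  Rabs (ampl_sum M S_ (fun _ => t)) < transmission M (fun _ => t).
Proof.
  destruct diag_leading_order as [E [h [HE [Hh [Hh0 Hfact]]]]].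
  assert (HQ : tends (locally 0) (fun t => ampl_sum M S_ (fun _ => t)) 0).
  { replace 0 with (0 ^ E * h 0) at 2 by (rewrite pow_i by lia; ring).
    apply filterlim_ext with (fun t => t ^ E * h t); [intros; auto|].
    apply tends_mult; [apply tends_pow, tends_id_locally | exact Hh]. }
  assert (HA : tends (locally 0) (fun t => transmission M (fun _ => t)) 1).
  { replace 1 with (transmission M (fun _ => 0))
      by (rewrite <- (prodR_one (S M)); apply prodR_ext; intros; simpl; ring).
    apply tends_transmission. intros. apply tends_id_locally. }
  assert (Hhalf : 0 < / 2) by lra.
  assert (Hh2 : 0 < Rabs (h 0) / 2) by (pose proof (Rabs_pos_lt _ Hh0); lra).
  destruct (small_positive_point _ (filter_and _ _ (tends_get h (h 0) _ Hh Hh2)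
     (filter_and _ _ (tends_get _ _ _ HQ Hhalf) (tends_get _ _ _ HA Hhalf))))
    as [t [Ht [Hht [HQt HAt]]]].
  exists t. split; [exact Ht|].
  apply Rabs_def2 in HAt. rewrite Rminus_0_r in HQt.
  split; [|lra].
  rewrite Hfact. apply Rmult_integral_contrapositive. split; [apply pow_nonzero; lra|].
  intros E0. rewrite E0, Rminus_0_l, Rabs_Ropp in Hht. lra.
Qed.
End Diagonal.

(** ** Closed boxes have positive outer measure *)

Definition ind (l h t : R) : R := if Rle_dec l t then if Rle_dec t h then 1 else 0 else 0.

Lemma ind_nonneg l h t : 0 <= ind l h t.
Proof. unfold ind; repeat destruct Rle_dec; lra. Qed.

Lemma ind_in l h t : l <= t <= h -> ind l h t = 1.
Proof. intros H; unfold ind; repeat destruct Rle_dec; lra. Qed.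

Lemma ind_enlarge l h t s dl : 0 < dl -> Rabs (s - t) < dl ->
  ind l h t <= ind (l - dl) (h + dl) s.
Proof. intros Hd Hs. apply Rabs_def2 in Hs. unfold ind; repeat destruct Rle_dec; lra. Qed.

Lemma grid_count l h dl : 0 < dl -> forall N a,
  dl * sumR (S N) (fun m => ind l h (a + INR m * dl)) <= Rmax 0 (h - Rmax a l + dl).
Proof.
  intros Hd N. induction N as [|N IH]; intros a.
  - unfold sumR; simpl. rewrite Rmult_0_l, !Rplus_0_r.
    unfold ind, Rmax; repeat destruct Rle_dec; lra.
  - rewrite sumR_shift.
    rewrite (sumR_ext _ _ (fun m => ind l h ((a + dl) + INR m * dl)))
      by (intros i _; rewrite S_INR; f_equal; ring).
    specialize (IH (a + dl)). simpl INR. rewrite Rmult_0_l, Rplus_0_r, Rmult_plus_distr_l.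
    unfold ind, Rmax in *; repeat destruct Rle_dec; lra.
Qed.

Lemma nonpos_of_bounded_multiples c K : (forall N, (1 <= N)%nat -> c * INR N <= K) -> c <= 0.
Proof.
  intros H. destruct (Rle_dec c 0) as [Hc|Hc]; [exact Hc|]. exfalso.
  destruct (INR_archimed c K) as [n Hn]; [lra|].
  specialize (H (S n) ltac:(lia)). rewrite S_INR in H. lra.
Qed.

(** Sampling on the grid of mesh [(b - a)/N] gives the bound up to [O(1/N)]. *)
Lemma interval_cover_finite a b n (l h w : nat -> R) D :
  a < b -> (forall j, l j <= h j) -> (forall j, 0 <= w j) ->
  (forall s, a <= s <= b -> D <= sumR n (fun j => w j * ind (l j) (h j) s)) ->
  D * (b - a) <= sumR n (fun j => w j * (h j - l j)).
Proof.
  intros Hab Hlh Hw HD.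
  set (X := sumR n (fun j => w j * (h j - l j))).
  set (W := sumR n w).
  enough (D * (b - a) - X <= 0) by lra.
  apply (nonpos_of_bounded_multiples _ ((b - a) * (W - D))). intros N HN.
  assert (HNpos : 0 < INR N) by (apply lt_0_INR; lia).
  set (dl := (b - a) / INR N).
  assert (Hdl : 0 < dl) by (apply Rdiv_lt_0_compat; lra).
  assert (HNdl : INR N * dl = b - a) by (unfold dl; field; lra).
  set (T := sumR (S N) (fun m => sumR n (fun j => w j * ind (l j) (h j) (a + INR m * dl)))).
  assert (Hlower : INR (S N) * D <= T).
  { rewrite <- sumR_const. apply sumR_le. intros m Hm. apply HD.
    assert (INR m <= INR N) by (apply le_INR; lia).
    pose proof (pos_INR m). split; nra. }
  assert (Hupper : dl * T <= X + dl * W).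
  { unfold T, X, W. rewrite sumR_swap, <- !sumR_scal, <- sumR_plus. apply sumR_le.
    intros j _. rewrite sumR_scal.
    pose proof (grid_count (l j) (h j) dl Hdl N a) as Hc.
    assert (Rmax 0 (h j - Rmax a (l j) + dl) <= h j - l j + dl).
    { pose proof (Hlh j). pose proof (Rmax_r a (l j)). unfold Rmax at 1; destruct Rle_dec; lra. }
    pose proof (Hw j). nra. }
  rewrite S_INR in Hlower. nra.
Qed.

(** Proved by the least-upper-bound property. *)
Lemma uniform_on_interval a b (G : nat -> R -> Prop) : a <= b ->
  (forall n m s, (n <= m)%nat -> G n s -> G m s) ->
  (forall t, a <= t <= b -> exists n rho, 0 < rho /\ forall s, Rabs (s - t) < rho -> G n s) ->
  exists N, forall s, a <= s <= b -> G N s.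
Proof.
  intros Hab Hmono Hloc.
  set (A := fun x => a <= x <= b /\ exists N, forall s, a <= s <= x -> G N s).
  assert (HAa : A a).
  { split; [lra|]. destruct (Hloc a) as [n [rho [Hr Hs]]]; [lra|].
    exists n. intros s Hs'. apply Hs. replace (s - a) with 0 by lra. rewrite Rabs_R0; auto. }
  destruct (completeness A) as [sup [Hub Hlub]];
    [exists b; intros x [Hx _]; lra | exists a; exact HAa |].
  assert (Hsa : a <= sup) by (apply Hub; auto).
  assert (Hsb : sup <= b) by (apply Hlub; intros x [Hx _]; lra).
  destruct (Hloc sup) as [n0 [rho [Hr Hs0]]]; [lra|].
  assert (Hx : exists x, A x /\ sup - rho / 2 < x).
  { apply NNPP. intros Hn.
    assert (sup <= sup - rho / 2); [|lra].
    apply Hlub. intros x Ax. apply Rnot_lt_le. intros Hlt. apply Hn. exists x; auto. }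
  destruct Hx as [x [[_ [N1 HN1]] Hx2]].
  set (N := Nat.max N1 n0).
  assert (Hbeyond : forall s, a <= s <= sup + rho / 2 -> G N s).
  { intros s Hs. destruct (Rle_dec s x).
    - apply Hmono with N1; [lia | apply HN1; lra].
    - apply Hmono with n0; [lia | apply Hs0, Rabs_def1; lra]. }
  exists N. intros s Hs.
  destruct (Rle_dec b (sup + rho / 2)); [apply Hbeyond; lra|].
  assert (sup + rho / 2 <= sup); [|lra].
  apply Hub. split; [lra|]. exists N. intros; apply Hbeyond; lra.
Qed.

Fixpoint min_upto (n : nat) (f : nat -> R) : R :=
  match n with O => 1 | S n' => Rmin (min_upto n' f) (f n') end.

Lemma min_upto_pos n f : (forall j, 0 < f j) -> 0 < min_upto n f.
Proof. intros H; induction n; simpl; [lra | apply Rmin_pos; auto]. Qed.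

Lemma min_upto_le n f j : (j < n)%nat -> min_upto n f <= f j.
Proof.
  induction n; intros Hj; [lia|]. simpl. destruct (Nat.eq_dec j n) as [->|Hne].
  - apply Rmin_r.
  - apply Rle_trans with (min_upto n f); [apply Rmin_l | apply IHn; lia].
Qed.

Lemma enlargement_cost N (w : nat -> R) e : 0 <= e -> (forall j, 0 <= w j) ->
  sumR N (fun j => 2 * w j * (e * (/2) ^ j / (w j + 1))) <= 4 * e.
Proof.
  intros He Hw.
  apply Rle_trans with (sumR N (fun j => 2 * e * (/2) ^ j)).
  - apply sumR_le. intros j _. pose proof (Hw j). pose proof (pow_lt (/2) j ltac:(lra)).
    replace (2 * w j * (e * (/ 2) ^ j / (w j + 1)))
      with (2 * e * (/2) ^ j * (w j / (w j + 1))) by (field; lra).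
    rewrite <- (Rmult_1_r (2 * e * (/2) ^ j)) at 2. apply Rmult_le_compat_l; [nra|].
    apply Rmult_le_reg_r with (w j + 1); [lra|].
    unfold Rdiv. rewrite Rmult_assoc, Rinv_l; lra.
  - rewrite sumR_scal, geom_sum. pose proof (pow_lt (/2) N ltac:(lra)). nra.
Qed.

(** The intervals are slightly
    enlarged, compactness yields a uniform finite subfamily, and
    [interval_cover_finite] applies. *)
Lemma interval_cover_bound a b (l h w : nat -> R) D :
  a <= b -> (forall j, l j <= h j) -> (forall j, 0 <= w j) ->
  (forall t, a <= t <= b -> forall eps, 0 < eps ->
     exists n, D - eps <= sumR n (fun j => w j * ind (l j) (h j) t)) ->
  forall eps, 0 < eps -> exists n, D * (b - a) - eps <= sumR n (fun j => w j * (h j - l j)).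
Proof.
  intros Hab Hlh Hw Hpt eps Heps.
  destruct (Req_dec a b) as [<-|Hne]; [exists O; unfold sumR; simpl; lra|].
  set (e1 := eps / (2 * (b - a))).
  assert (He1 : 0 < e1) by (apply Rdiv_lt_0_compat; lra).
  set (dl := fun j => eps / 8 * (/2) ^ j / (w j + 1)).
  assert (Hdl : forall j, 0 < dl j).
  { intros j. pose proof (pow_lt (/2) j ltac:(lra)). pose proof (Hw j).
    apply Rdiv_lt_0_compat; [apply Rmult_lt_0_compat|]; lra. }
  set (G := fun n s => D - e1 <= sumR n (fun j => w j * ind (l j - dl j) (h j + dl j) s)).
  destruct (uniform_on_interval a b G Hab) as [N HN].
  { intros n m s Hnm HG. eapply Rle_trans; [apply HG | apply sumR_mono_n; auto].
    intros i. apply Rmult_le_pos; [auto | apply ind_nonneg]. }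
  { intros t Ht. destruct (Hpt t Ht e1 He1) as [n Hn].
    exists n, (min_upto n dl). split; [apply min_upto_pos; auto|].
    intros s Hs. eapply Rle_trans; [apply Hn|]. apply sumR_le. intros j Hj.
    apply Rmult_le_compat_l; [auto|]. apply ind_enlarge; [auto|].
    eapply Rlt_le_trans; [apply Hs | apply min_upto_le; auto]. }
  assert (Hfin := interval_cover_finite a b N (fun j => l j - dl j) (fun j => h j + dl j) w
                    (D - e1) ltac:(lra) ltac:(intros j; pose proof (Hlh j); pose proof (Hdl j); lra)
                    Hw HN).
  assert (Hsplit : sumR N (fun j => w j * (h j + dl j - (l j - dl j))) =
                   sumR N (fun j => w j * (h j - l j)) + sumR N (fun j => 2 * w j * dl j))
    by (rewrite <- sumR_plus; apply sumR_ext; intros; ring).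
  pose proof (enlargement_cost N w (eps / 8) ltac:(lra) Hw) as Hcost.
  exists N. unfold e1 in Hfin.
  replace ((D - eps / (2 * (b - a))) * (b - a)) with (D * (b - a) - eps / 2) in Hfin
    by (field; lra).
  cbv beta in Hfin. unfold dl in *. lra.
Qed.

Definition box_ind (d : nat) (lo hi x : nat -> R) : R := prodR d (fun i => ind (lo i) (hi i) (x i)).

Lemma box_vol_nonneg d lo hi : (forall i, (i < d)%nat -> lo i <= hi i) -> 0 <= box_vol d lo hi.
Proof. intros H. apply prodR_nonneg. intros i Hi. specialize (H i Hi). lra. Qed.

(** The covering inequality in dimension [d], by induction on [d]: integrating out the
    last coordinate with [interval_cover_bound] reduces to dimension [d - 1] with new
    weights [c j * ind (lo j d) (hi j d) t]. *)
Lemma box_cover_bound : forall d (a b : nat -> R) (lo hi : nat -> nat -> R) (c : nat -> R) D,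
  (forall i, (i < d)%nat -> a i <= b i) -> (forall j i, (i < d)%nat -> lo j i <= hi j i) ->
  (forall j, 0 <= c j) ->
  (forall x, (forall i, (i < d)%nat -> a i <= x i <= b i) -> forall eps, 0 < eps ->
      exists n, D - eps <= sumR n (fun j => c j * box_ind d (lo j) (hi j) x)) ->
  forall eps, 0 < eps ->
    exists n, D * box_vol d a b - eps <= sumR n (fun j => c j * box_vol d (lo j) (hi j)).
Proof.
  induction d as [|d IH]; intros a b lo hi c D Hab Hlh Hc Hpt eps Heps.
  - destruct (Hpt a (fun i Hi => ltac:(lia)) eps Heps) as [n Hn]. exists n.
    replace (D * box_vol 0 a b) with D by (unfold box_vol, prodR; simpl; ring). exact Hn.
  - assert (Hvol : forall j, 0 <= c j * box_vol d (lo j) (hi j)).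
    { intros j. apply Rmult_le_pos; [auto | apply box_vol_nonneg; intros; apply Hlh; lia]. }
    destruct (interval_cover_bound (a d) (b d) (fun j => lo j d) (fun j => hi j d)
                (fun j => c j * box_vol d (lo j) (hi j)) (D * box_vol d a b)
                (Hab d ltac:(lia)) (fun j => Hlh j d ltac:(lia)) Hvol)
      with (eps := eps) as [n Hn]; [|exact Heps|].
    + intros t Ht e He.
      destruct (IH a b lo hi (fun j => c j * ind (lo j d) (hi j d) t) D)
        with (eps := e) as [n Hn]; auto.
      * intros j. apply Rmult_le_pos; [auto | apply ind_nonneg].
      * intros x Hx e' He'.
        set (x' := fun i => if (i <? d)%nat then x i else t).
        destruct (Hpt x') with (eps := e') as [n Hn]; [|exact He'|].
        { intros i Hi. unfold x'. destruct (Nat.ltb_spec i d); [apply Hx; auto|].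
          replace i with d by lia. exact Ht. }
        exists n. eapply Rle_trans; [apply Hn|]. right. apply sumR_ext. intros j _.
        unfold box_ind. rewrite prodR_S. unfold x' at 2. rewrite Nat.ltb_irrefl.
        rewrite (prodR_ext d _ (fun i => ind (lo j i) (hi j i) (x i))); [ring|].
        intros i Hi. unfold x'. destruct (Nat.ltb_spec i d); [reflexivity | lia].
      * exists n. eapply Rle_trans; [apply Hn|]. right. apply sumR_ext. intros; ring.
    + exists n. unfold box_vol in *. rewrite prodR_S, <- Rmult_assoc.
      eapply Rle_trans; [apply Hn|]. right. apply sumR_ext. intros j _. rewrite prodR_S. ring.
Qed.

(** A set containing a closed cube of positive side has positive outer measure:
    any countable cover by boxes has total volume at least half the cube's volume. *)
Lemma box_positive_outer_measure d (a : nat -> R) eta (E : (nat -> R) -> Prop) : 0 < eta ->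
  (forall x, (forall i, (i < d)%nat -> a i - eta <= x i <= a i + eta) -> E x) ->
  positive_outer_measure d E.
Proof.
  intros Heta HE.
  set (V := box_vol d (fun i => a i - eta) (fun i => a i + eta)).
  assert (HV : 0 < V) by (apply prodR_pos; intros; lra).
  exists (V / 2). split; [lra|]. intros lo hi Hlh Hcov.
  destruct (box_cover_bound d (fun i => a i - eta) (fun i => a i + eta) lo hi (fun _ => 1) 1)
    with (eps := V / 2) as [n Hn]; [intros; lra | exact Hlh | intros; lra | | lra |].
  - intros x Hx e He. destruct (Hcov x (HE x Hx)) as [j Hj].
    exists (S j). eapply Rle_trans; [|apply sumR_ge_term with (j := j); [lia|]].
    + rewrite Rmult_1_l. unfold box_ind.
      rewrite (prodR_ext _ _ (fun _ => 1)), prodR_one; [lra|].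
      intros i Hi. apply ind_in. auto.
    + intros. rewrite Rmult_1_l. apply prodR_nonneg. intros; apply ind_nonneg.
  - exists n. fold V in Hn. eapply Rle_trans; [|eapply Rle_trans; [apply Hn|]]; [lra|].
    right. apply sumR_ext. intros; ring.
Qed.

Lemma good_neighbourhood M S_ c :
  ampl_sum M S_ c <> 0 -> Rabs (ampl_sum M S_ c) < transmission M c ->
  coord_nbhd M c (fun x => ampl_sum M S_ x <> 0 /\ Rabs (ampl_sum M S_ x) < transmission M x).
Proof.
  apply eventually_nonzero_below.
  - apply tends_sumL. intros k _. apply tends_trunc_ampl, tends_coord.
  - apply tends_transmission, tends_coord.
Qed.

(** At such a point with coordinates in [(-1,1)], the equation — affine in [R_(M+1)] with
    slope [transmission] — is solved by [R_(M+1) = - ampl_sum / transmission],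
    which is nonzero and lies in [(-1,1)]. *)
Lemma solvable_point M S_ x :
  (forall k, In k S_ -> avoids_last_layer M k) ->
  (forall n, (n <= M)%nat -> -1 < x n < 1) ->
  ampl_sum M S_ x <> 0 -> Rabs (ampl_sum M S_ x) < transmission M x ->
  (forall n, (n <= M)%nat -> -1 < x n < 1) /\
  exists rM1 : R, rM1 <> 0 /\ -1 < rM1 < 1 /\
    let R' := fun n => if (n <=? M)%nat then x n else rM1 in
    ampl R' (ones (S M)) + sumL S_ (fun k => ampl R' k) = 0.
Proof.
  intros Havoid Hx HQ HQA. split; [exact Hx|].
  set (Q := ampl_sum M S_ x) in *. set (A := transmission M x) in *.
  assert (HA : 0 < A) by (pose proof (Rabs_pos Q); lra).
  apply Rabs_def2 in HQA.
  exists (- Q / A). split; [|split].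
  - intros E. apply HQ. apply (f_equal (Rmult A)) in E. field_simplify in E; lra.
  - split; apply (Rmult_lt_reg_r A); try lra; field_simplify; lra.
  - intros R'.
    assert (HR' : forall n, (n <= M)%nat -> R' n = x n)
      by (intros n Hn; unfold R'; destruct (Nat.leb_spec n M); [reflexivity | lia]).
    rewrite (ampl_ones_split M R' x (- Q / A)), (sumL_ext S_ _ (fun k => trunc_ampl M k x)).
    + fold A. fold (ampl_sum M S_ x) Q. field. lra.
    + intros k Hk. apply ampl_avoiding; auto.
    + exact HR'.
    + unfold R'. destruct (Nat.leb_spec (S M) M); [lia | reflexivity].
Qed.

Theorem lemma3p1 (M : nat) (HM : (1 <= M)%nat) (tau : nat -> R)
  (Htau : forall n, (n <= S M)%nat -> 0 < tau n)
  (S_ : list (list nat)) (HSnodup : NoDup S_)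
  (HS : forall k, In k S_ <->
          (inLtau (S M) tau k /\ k <> ones (S M) /\ dotk k tau = dotk (ones (S M)) tau))
  (HSne : S_ <> nil) :
  positive_outer_measure (S M)
    (fun r : nat -> R =>
       (forall n, (n <= M)%nat -> -1 < r n < 1) /\
       exists rM1 : R, rM1 <> 0 /\ -1 < rM1 < 1 /\
         let R' := fun n => if (n <=? M)%nat then r n else rM1 in
         ampl R' (ones (S M)) + sumL S_ (fun k => ampl R' k) = 0).
Proof.
  assert (Havoid : forall k, In k S_ -> avoids_last_layer M k).
  { intros k Hk. apply HS in Hk as [[HL _] [Hne Hdot]].
    exact (S_avoids_last_layer M tau k Htau HL Hne Hdot). }
  destruct (diag_good_point M S_ Havoid HSne) as [t [Ht [HQ HQA]]].
  destruct (good_neighbourhood M S_ (fun _ => t) HQ HQA) as [dl Hdl].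
  set (eta := Rmin dl (1/8) / 2).
  assert (Heta : 0 < eta < dl /\ eta <= 1/16).
  { pose proof (cond_pos dl). pose proof (Rmin_l dl (1/8)). pose proof (Rmin_r dl (1/8)).
    assert (0 < Rmin dl (1/8)) by (apply Rmin_pos; lra). unfold eta. lra. }
  apply (box_positive_outer_measure (S M) (fun _ => t) eta); [lra|].
  intros x Hx.
  assert (Hclose : forall i, (i <= M)%nat -> Rabs (x i - t) < dl)
    by (intros i Hi; specialize (Hx i ltac:(lia)); apply Rabs_def1; lra).
  destruct (Hdl x Hclose) as [HQx HQAx].
  apply solvable_point; auto.
  intros n Hn. specialize (Hx n ltac:(lia)). lra.
Qed.
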